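(* Let $x_1, \ldots, x_n$ be Herzog–Kunz generators of $R$ and for $i = 1, \ldots, n-1$ let $T_i = k[[x_1, \ldots, x_i]]$. Then (a) $a_1 = \min\{v(r) : r \in \mathfrak m\setminus\{0\}\}$ is the multiplicity of $R$, and $a_{i+1} = \min\big(V(R) \setminus V(T_i)\big)$ for $i = 1, \ldots, n-1$; (b) for every $l \in \mathbb N$, setting $i_0 = \max\{i : a_i \le l\}$ (with $k[x_1,\ldots,x_{i_0}] := k$ if no $a_i \le l$), every $f \in R$ can be written as $f = p + g$ with $p \in k[x_1, \ldots, x_{i_0}]$ (a polynomial in $x_1,\ldots,x_{i_0}$) and $g \in R$ with $v(g) \ge l+1$.
   Context: Let $k$ be a field and let $(R,\mathfrak m)$ be a complete local noetherian domain of dimension $1$ containing $k$ with $R/\mathfrak m = k$, with normalization $\overline R$ having residue field $k$, so $\overline R = k[[t]]$ and $R \subseteq k[[t]]$ is finite birational. Let $v$ be the $t$-adic valuation on $k((t))$, $v(0)=\infty$. For $A \subseteq k((t))$ let $v(A) = \{v(f): f\in A\setminus\{0\}\}$, and for a subring $T$ let $V(T) = v(T)$ be its value semigroup. The Herzog–Kunz sequence of $R$ is $v(\mathfrak m)\setminus v(\mathfrak m^2)$ listed increasingly as $a_1 < \cdots < a_n$; Herzog–Kunz generators are elements $x_1,\ldots,x_n \in R$ with $v(x_i) = a_i$. For $x_1,\ldots,x_i\in\mathfrak m$, $k[[x_1,\ldots,x_i]]$ is the image of $k[[X_1,\ldots,X_i]]\to k[[t]]$, $X_j\mapsto x_j$.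 *)

(* Formal power series k[[t]] are modelled as coefficient
   functions nat -> k, with the Cauchy product. *)
From mathcomp Require Import all_boot all_algebra.
Set Implicit Arguments. Unset Strict Implicit. Unset Printing Implicit Defensive.
Import GRing.Theory.
Local Open Scope ring_scope.

Section PowerSeries.
Variable k : fieldType.

Definition ps := nat -> k.
Definition pC (c : k) : ps := fun n => if n is 0%N then c else 0.
Definition padd (f g : ps) : ps := fun n => f n + g n.
Definition popp (f : ps) : ps := fun n => - f n.
Definition pmul (f g : ps) : ps := fun n => \sum_(i < n.+1) f i * g (n - i)%N.
Definition pscale (c : k) (f : ps) : ps := fun n => c * f n.
Definition pexp (f : ps) (m : nat) : ps := iter m (pmul f) (pC 1).
Definition psum d (F : 'I_d -> ps) : ps := fun n => \sum_(j < d) F j n.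

Definition is_val (f : ps) (m : nat) : Prop :=
  f m != 0 /\ forall j, (j < m)%N -> f j = 0.
(* v(g) >= N  (true for g = 0, as v(0) = oo) *)
Definition val_ge (f : ps) (N : nat) : Prop := forall j, (j < N)%N -> f j = 0.
Definition vset (A : ps -> Prop) (s : nat) : Prop := exists2 f, A f & is_val f s.

Definition ksubalg (R : ps -> Prop) : Prop :=
  (forall c, R (pC c)) /\
  (forall f g, R f -> R g -> R (padd f g)) /\
  (forall f, R f -> R (popp f)) /\
  (forall f g, R f -> R g -> R (pmul f g)).

Definition finite_over (R : ps -> Prop) : Prop :=
  exists d (e : 'I_d -> ps), forall h : ps, exists r : 'I_d -> ps,
    (forall j, R (r j)) /\ h = psum (fun j => pmul (r j) (e j)).

(* birational: k[[t]] is contained in Frac(R) (hence Frac R = k((t))) *)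
Definition birational (R : ps -> Prop) : Prop :=
  forall h : ps, exists a b, R a /\ R b /\ (exists j, b j != 0) /\ pmul h b = a.

(* completeness: R is closed in the t-adic topology *)
Definition tclosed (R : ps -> Prop) : Prop :=
  forall f : ps, (forall N, exists2 g, R g & forall j, (j < N)%N -> g j = f j) -> R f.

Definition maxid (R : ps -> Prop) (f : ps) : Prop := R f /\ f 0%N = 0.

Fixpoint mpow (R : ps -> Prop) (n : nat) : ps -> Prop :=
  match n with
  | 0 => R
  | n'.+1 => fun f => exists d (u w : 'I_d -> ps),
      (forall j, mpow R n' (u j) /\ maxid R (w j)) /\
      f = psum (fun j => pmul (u j) (w j))
  end.

(* dim_k (A / B) = d, for k-subspaces B <= A *)
Definition kquotdim (A B : ps -> Prop) (d : nat) : Prop :=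
  exists y : 'I_d -> ps, (forall j, A (y j)) /\
    (forall f, A f -> exists c : 'I_d -> k, exists2 b, B b &
        f = padd (psum (fun j => pscale (c j) (y j))) b) /\
    (forall c : 'I_d -> k, B (psum (fun j => pscale (c j) (y j))) ->
        forall j, c j = 0).

(* multiplicity e(R) of the one-dimensional local ring R: the eventual value
   of the Hilbert function n |-> dim_k (m^n / m^(n+1)) *)
Definition multiplicity (R : ps -> Prop) (e : nat) : Prop :=
  exists N, forall n, (N <= n)%N -> kquotdim (mpow R n) (mpow R n.+1) e.

(* monomial x_1^{al_0} ... x_i^{al_(i-1)} (x is indexed from 1) *)
Definition monom (i : nat) (x : nat -> ps) (al : 'I_i -> nat) : ps :=
  \big[pmul/pC 1]_(j < i) pexp (x j.+1) (al j).

(* image of F in k[[X_1..X_i]] under X_j |-> x_j (requires v(x_j) >= 1):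
   coefficient n only involves monomials with all exponents <= n *)
Definition series_subst (i : nat) (x : nat -> ps)
    (F : {ffun 'I_i -> nat} -> k) : ps :=
  fun n => \sum_(al : {ffun 'I_i -> 'I_n.+1})
             F [ffun j => nat_of_ord (al j)] * @monom i x (fun j => nat_of_ord (al j)) n.

Definition pwrseries_in (i : nat) (x : nat -> ps) (f : ps) : Prop :=
  exists F, f = @series_subst i x F.

Definition poly_in (i : nat) (x : nat -> ps) (f : ps) : Prop :=
  exists N (c : {ffun 'I_i -> 'I_N} -> k),
    f = fun m => \sum_(al : {ffun 'I_i -> 'I_N})
                   c al * @monom i x (fun j => nat_of_ord (al j)) m.

Definition hk_seq (R : ps -> Prop) (n : nat) (a : nat -> nat) : Prop :=
  (forall i j, (1 <= i)%N -> (i < j)%N -> (j <= n)%N -> (a i < a j)%N) /\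
  (forall s, (vset (maxid R) s /\ ~ vset (mpow R 2) s) <->
             exists2 i, (1 <= i <= n)%N & a i = s).

End PowerSeries.
Arguments pwrseries_in {k} i x f.
Arguments poly_in {k} i x f.

(* Since [v(m^2) >= 2 a_1], the least value
   of [m] is not in [v(m^2)], so it is [a_1]. For (b), induct on [l] and peel
   off leading terms: a value [N <= l] of [R] is the valuation either of some
   [x_j] with [a_j = N <= l], or of an element of [m^2], a sum of products of
   two elements of [m] which are approximated at the smaller level [l - a_1].
   Modulo [m^2] a polynomial in [x_1, ..., x_i] is linear in the [x_j], so its
   values in [v(m) \ v(m^2)] are among [a_1, ..., a_i]; this excludes [a_(i+1)]
   from [v(k[[x_1, ..., x_i]])], while (b) puts every smaller value of [R] in it.
   For the multiplicity, a common denominator of generators of [k[[t]]] over [R]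
   and completeness give [t^C k[[t]] <= R]; dividing by powers of [x_1] shows
   that [v(m^n)] contains every value [>= C + n a_1], and [v(m^n) + a_1] lies in
   [v(m^(n+1))]. The traces of [v(m^n)] on windows of length [C] eventually
   stabilize, after which [v(m^n) \ v(m^(n+1))] has one value in each residue
   class modulo [a_1], so [dim_k m^n / m^(n+1) = a_1]. *)

From HB Require Import structures.
From mathcomp Require Import all_boot all_algebra.
From mathcomp Require Import boolp.
From mathcomp Require Import zify ring.
Set Implicit Arguments. Unset Strict Implicit. Unset Printing Implicit Defensive.
Import GRing.Theory.
Local Open Scope ring_scope.

HB.instance Definition _ (k : fieldType) := Choice.on (ps k).

Section PowerSeriesRing.
Variable k : fieldType.
Implicit Types f g h : ps k.

Lemma paddA : associative (@padd k).
Proof. by move=> f g h; apply: funext => m; rewrite /padd addrA. Qed.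

Lemma paddC : commutative (@padd k).
Proof. by move=> f g; apply: funext => m; rewrite /padd addrC. Qed.

Lemma padd0 : left_id (pC 0) (@padd k).
Proof. by move=> f; apply: funext => -[|m]; rewrite /padd /= add0r. Qed.

Lemma paddN : left_inverse (pC 0) (@popp k) (@padd k).
Proof. by move=> f; apply: funext => -[|m]; rewrite /padd /popp /= addNr. Qed.

HB.instance Definition _ := GRing.isZmodule.Build (ps k) paddA paddC padd0 paddN.

(* Coefficients of a product up to degree [N] are those of the product of the
   truncations; this transfers the ring laws from [{poly k}]. *)
Definition ps_trunc N f : {poly k} := \poly_(i < N.+1) f i.

Lemma coef_ps_trunc N f j : (j <= N)%N -> (ps_trunc N f)`_j = f j.
Proof. by move=> le; rewrite coef_poly ltnS le. Qed.

Lemma pmul_trunc f g N m : (m <= N)%N -> pmul f g m = (ps_trunc N f * ps_trunc N g)`_m.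
Proof.
move=> le; rewrite coefM; apply: eq_bigr => i _.
by rewrite !coef_ps_trunc // ?(leq_trans (leq_ord i)) ?(leq_trans (leq_subr _ _)).
Qed.

Lemma coefM_eq (p q p' q' : {poly k}) m :
  (forall j, (j <= m)%N -> p`_j = p'`_j /\ q`_j = q'`_j) -> (p * q)`_m = (p' * q')`_m.
Proof.
move=> eq_pq; rewrite !coefM; apply: eq_bigr => i _.
by have [-> _] := eq_pq i (leq_ord i); have [_ ->] := eq_pq _ (leq_subr i m).
Qed.

Lemma ps_trunc_pmul f g N j :
  (j <= N)%N -> (ps_trunc N (pmul f g))`_j = (ps_trunc N f * ps_trunc N g)`_j.
Proof. by move=> le; rewrite coef_ps_trunc // (pmul_trunc _ _ le). Qed.

Lemma pmulA : associative (@pmul k).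
Proof.
move=> f g h; apply: funext => m.
rewrite (pmul_trunc _ _ (leqnn m)) [pmul (pmul f g) h m](pmul_trunc _ _ (leqnn m)).
transitivity ((ps_trunc m f * ps_trunc m g * ps_trunc m h)`_m).
  by rewrite -mulrA; apply: coefM_eq => j le; rewrite ps_trunc_pmul ?(leq_trans le).
by apply: coefM_eq => j le; rewrite ps_trunc_pmul ?(leq_trans le).
Qed.

Lemma pmulC : commutative (@pmul k).
Proof. by move=> f g; apply: funext => m; rewrite !(pmul_trunc _ _ (leqnn m)) mulrC. Qed.

Lemma pmul1 : left_id (pC 1) (@pmul k).
Proof.
move=> f; apply: funext => m; rewrite (pmul_trunc _ _ (leqnn m)).
suff -> : ps_trunc m (pC 1) = 1 by rewrite mul1r coef_ps_trunc.
by apply/polyP => -[|j]; rewrite coef_poly coefC //=; case: ifP.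
Qed.

Lemma pmulDl : left_distributive (@pmul k) (@padd k).
Proof.
move=> f g h; apply: funext => m; rewrite /pmul /padd -big_split /=.
by apply: eq_bigr => i _; rewrite mulrDl.
Qed.

Lemma pC1_neq0 : pC 1 != pC 0 :> ps k.
Proof. by apply/eqP => /(congr1 (fun f => f 0%N)) /= /eqP; rewrite oner_eq0. Qed.

HB.instance Definition _ :=
  GRing.Zmodule_isComNzRing.Build (ps k) pmulA pmulC pmul1 pmulDl pC1_neq0.

Lemma psD f g m : (f + g) m = f m + g m. Proof. by []. Qed.
Lemma psN f m : (- f) m = - f m. Proof. by []. Qed.
Lemma psB f g m : (f - g) m = f m - g m. Proof. by []. Qed.
Lemma ps0 m : (0 : ps k) m = 0. Proof. by case: m. Qed.
Lemma psM f g m : (f * g) m = \sum_(i < m.+1) f i * g (m - i)%N. Proof. by []. Qed.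

Lemma ps_sum I (r : seq I) (P : pred I) (F : I -> ps k) m :
  (\sum_(i <- r | P i) F i) m = \sum_(i <- r | P i) F i m.
Proof. by apply: (big_morph (fun f : ps k => f m)) => //; case: m. Qed.

Lemma psCM c f m : (pC c * f) m = c * f m.
Proof. by rewrite psM big_ord_recl subn0 big1 ?addr0 // => i _; rewrite mul0r. Qed.

Lemma pC0 : pC 0 = 0 :> ps k. Proof. by []. Qed.
Lemma pC1 : pC 1 = 1 :> ps k. Proof. by []. Qed.

Lemma pCD a b : pC (a + b) = pC a + pC b :> ps k.
Proof. by apply: funext => -[|m]; rewrite psD //= addr0. Qed.

Lemma pCN a : pC (- a) = - pC a :> ps k.
Proof. by apply: funext => -[|m]; rewrite psN //= oppr0. Qed.

Lemma pCM a b : pC (a * b) = pC a * pC b :> ps k.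
Proof. by apply: funext => m; rewrite psCM; case: m => [|m] /=; rewrite ?mulr0. Qed.

Lemma paddE f g : padd f g = f + g. Proof. by []. Qed.
Lemma pmulE f g : pmul f g = f * g. Proof. by []. Qed.
Lemma pscaleE c f : pscale c f = pC c * f. Proof. by apply: funext => m; rewrite psCM. Qed.
Lemma psumE d (F : 'I_d -> ps k) : psum F = \sum_(j < d) F j.
Proof. by apply: funext => m; rewrite ps_sum. Qed.

Lemma pexpE f m : pexp f m = f ^+ m.
Proof. by elim: m => // m IH; rewrite exprS /pexp /= -/(pexp f m) IH. Qed.

Lemma monomE i (x : nat -> ps k) al : @monom k i x al = \prod_(j < i) x j.+1 ^+ al j.
Proof. by apply: eq_bigr => j _; rewrite pexpE. Qed.

End PowerSeriesRing.

Section Valuation.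
Variable k : fieldType.
Implicit Types f g h : ps k.

Lemma val_ge0 N : val_ge (0 : ps k) N. Proof. by move=> j _; rewrite ps0. Qed.

Lemma val_geW f N M : (M <= N)%N -> val_ge f N -> val_ge f M.
Proof. by move=> le vf j lt; apply: vf (leq_trans lt le). Qed.

Lemma val_geD f g N : val_ge f N -> val_ge g N -> val_ge (f + g) N.
Proof. by move=> vf vg j lt; rewrite psD vf ?vg ?addr0. Qed.

Lemma val_geN f N : val_ge f N -> val_ge (- f) N.
Proof. by move=> vf j lt; rewrite psN vf ?oppr0. Qed.

Lemma val_geB f g N : val_ge f N -> val_ge g N -> val_ge (f - g) N.
Proof. by move=> vf vg; apply: val_geD vf (val_geN vg). Qed.

Lemma val_ge_sum I (r : seq I) (P : pred I) (F : I -> ps k) N :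
  (forall i, P i -> val_ge (F i) N) -> val_ge (\sum_(i <- r | P i) F i) N.
Proof.
move=> vF; apply: (big_ind (fun f => val_ge f N)) => //; first exact: val_ge0.
by move=> f g; apply: val_geD.
Qed.

Lemma val_geM f g a b : val_ge f a -> val_ge g b -> val_ge (f * g) (a + b).
Proof.
move=> vf vg j lt; rewrite psM big1 // => i _.
have [lt_ia|le_ai] := ltnP i a; first by rewrite vf ?mul0r.
by rewrite vg ?mulr0 //; have := ltn_ord i; lia.
Qed.

Lemma val_geMl f g b : val_ge f b -> val_ge (f * g) b.
Proof. by move=> vf; rewrite -[b]addn0; apply: val_geM => // j. Qed.

Lemma val_geCM c f N : val_ge f N -> val_ge (pC c * f) N.
Proof. by move=> vf j lt; rewrite psCM vf ?mulr0. Qed.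

Lemma val_ge_subM f g p q e L : (e <= L)%N ->
  val_ge f e -> val_ge g e -> val_ge (f - p) L -> val_ge (g - q) L ->
  val_ge (f * g - p * q) (L + e).
Proof.
move=> le_eL vf vg vfp vgq.
have vp : val_ge p e by rewrite -[p](subKr f); apply: val_geB vf (val_geW le_eL vfp).
rewrite (_ : _ - _ = (f - p) * g + p * (g - q)); last by ring.
by apply: val_geD; [apply: val_geM|rewrite addnC; apply: val_geM].
Qed.

Lemma coefM_val f g a b : val_ge f a -> val_ge g b -> (f * g) (a + b)%N = f a * g b.
Proof.
move=> vf vg; rewrite psM (bigD1 (@Ordinal (a + b).+1 a (leq_addr b a))) //= addKn.
rewrite big1 ?addr0 // => i ne_ia.
have [lt_ia|le_ai] := ltnP i a; first by rewrite vf ?mul0r.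
have {}ne_ia : nat_of_ord i != a by apply: contra_neq ne_ia => eq_ia; apply: val_inj.
by rewrite vg ?mulr0 //; have := ltn_ord i; move: ne_ia le_ai; rewrite neq_ltn; lia.
Qed.

Lemma is_val_ge f a : is_val f a -> val_ge f a. Proof. by case. Qed.

Lemma is_valM f g a b : is_val f a -> is_val g b -> is_val (f * g) (a + b).
Proof.
move=> [fa vf] [gb vg]; split; last exact: val_geM.
by rewrite coefM_val // mulf_neq0.
Qed.

Lemma is_val1 : is_val (1 : ps k) 0.
Proof. by split; [rewrite /= oner_eq0|case]. Qed.

Lemma is_valX f v m : is_val f v -> is_val (f ^+ m) (m * v).
Proof.
move=> fv; elim: m => [|m IH]; first exact: is_val1.
by rewrite exprS mulSn; apply: is_valM.
Qed.

Lemma is_val_neq0 f a : is_val f a -> f != 0.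
Proof. by move=> [fa _]; apply: contraNneq fa => ->; rewrite ps0. Qed.

Lemma is_val_leq f a N : is_val f a -> val_ge f N -> (N <= a)%N.
Proof. by move=> [fa _] vf; rewrite leqNgt; apply: contra fa => /vf ->. Qed.

Lemma exists_is_val f : f != 0 -> exists a, is_val f a.
Proof.
move=> f_neq0; have [j fj] : exists j, f j != 0.
  apply/not_existsP => f0; move/eqP: f_neq0; apply; apply: funext => j.
  by rewrite ps0; apply/eqP; apply: contra_notT (f0 j).
have ex_j : exists j, f j != 0 by exists j.
case: (ex_minnP ex_j) => m fm min_m; exists m; split => // i lt.
by apply/eqP; apply: contraTT lt => /min_m; rewrite -leqNgt.
Qed.

Lemma pmul_neq0 f g : f != 0 -> g != 0 -> f * g != 0.
Proof.
by move=> /exists_is_val [a fa] /exists_is_val [b gb]; apply: is_val_neq0 (is_valM fa gb).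
Qed.

Lemma val_geS_or_is_val f N : val_ge f N -> val_ge f N.+1 \/ is_val f N.
Proof.
move=> vf; have [fN0|] := eqVneq (f N) 0; [left|by right].
by move=> j; rewrite ltnS leq_eqVlt => /predU1P [->|/vf].
Qed.

Lemma is_valDr f g a : is_val f a -> val_ge g a.+1 -> is_val (f + g) a.
Proof.
move=> [fa vf] vg; split; first by rewrite psD vg // addr0.
by move=> j lt; rewrite psD vf ?vg ?addr0 // (leq_trans lt).
Qed.

Lemma is_valCM c f a : c != 0 -> is_val f a -> is_val (pC c * f) a.
Proof. by move=> c0 [fa vf]; split; [rewrite psCM mulf_neq0|apply: val_geCM]. Qed.

Lemma is_val_sum d (F : 'I_d -> ps k) j0 s :
  is_val (F j0) s -> (forall j, j != j0 -> val_ge (F j) s.+1) -> is_val (\sum_j F j) s.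
Proof. by move=> F0 vF; rewrite (bigD1 j0) //=; apply/is_valDr/val_ge_sum. Qed.

Lemma is_valN f a : is_val f a -> is_val (- f) a.
Proof. by move=> [fa vf]; split; [rewrite psN oppr_eq0|apply: val_geN]. Qed.

Lemma is_valB_neq f g a b : is_val f a -> is_val g b -> a != b -> is_val (f - g) (minn a b).
Proof.
move=> fa gb; rewrite neq_ltn => /orP [] lt.
  rewrite (minn_idPl (ltnW lt)).
  exact: is_valDr fa (val_geN (val_geW lt (is_val_ge gb))).
rewrite (minn_idPr (ltnW lt)) -opprB.
exact/is_valN/(is_valDr gb (val_geN (val_geW lt (is_val_ge fa)))).
Qed.

Lemma val_ge_sub_lead f g a :
  is_val f a -> val_ge g a -> val_ge (g - pC (g a / f a) * f) a.+1.
Proof.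
move=> [fa vf] vg j; rewrite ltnS leq_eqVlt => /predU1P [->|lt].
  by rewrite psB psCM mulfVK // subrr.
by rewrite psB psCM (vg j lt) (vf j lt) mulr0 subrr.
Qed.

Definition tpow e : ps k := fun m => (m == e)%:R.

Lemma tpowM e f m : (tpow e * f) m = if (e <= m)%N then f (m - e)%N else 0.
Proof.
rewrite psM; case: leqP => le.
  rewrite (bigD1 (@Ordinal m.+1 e le)) //= /tpow eqxx mul1r big1 ?addr0 // => i ne.
  by rewrite (_ : (_ == e) = false) ?mul0r //; apply: contraNF ne => /eqP ie; apply/eqP/val_inj.
rewrite big1 // => i _; rewrite /tpow; case: eqP => [ie|]; last by rewrite mul0r.
by have := ltn_ord i; rewrite ie ltnS leqNgt le.
Qed.

Lemma is_val_tpow e : is_val (tpow e) e.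
Proof. by split; [rewrite /tpow eqxx oner_eq0|move=> j lt; rewrite /tpow ltn_eqF]. Qed.

Definition ps_shift e f : ps k := fun m => f (m + e)%N.

Lemma ps_shiftK e f : val_ge f e -> f = tpow e * ps_shift e f.
Proof.
move=> vf; apply: funext => m; rewrite tpowM /ps_shift.
by case: leqP => le; [rewrite subnK|rewrite vf].
Qed.

End Valuation.

Section Inverse.
Variables (k : fieldType) (u : ps k).
Hypothesis u0 : u 0%N != 0.

Fixpoint inv_coefs m : seq k :=
  if m is m'.+1 then
    rcons (inv_coefs m') (- (u 0%N)^-1 * \sum_(i < m) u i.+1 * nth 0 (inv_coefs m') (m' - i))
  else [:: (u 0%N)^-1].

Lemma size_inv_coefs m : size (inv_coefs m) = m.+1.
Proof. by elim: m => //= m IH; rewrite size_rcons IH. Qed.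

Definition ps_inv : ps k := fun j => nth 0 (inv_coefs j) j.

Lemma nth_inv_coefs m j : (j <= m)%N -> nth 0 (inv_coefs m) j = ps_inv j.
Proof.
elim: m => [|m IH]; first by rewrite leqn0 => /eqP ->.
rewrite leq_eqVlt => /predU1P [-> //|]; rewrite ltnS => le.
by rewrite /= nth_rcons size_inv_coefs ltnS le IH.
Qed.

Lemma mul_ps_inv : u * ps_inv = 1.
Proof.
apply: funext => -[|m]; first by rewrite psM big_ord1 /ps_inv /= mulfV.
rewrite psM big_ord_recl subn0 /=.
have -> : ps_inv m.+1 = - (u 0%N)^-1 * \sum_(i < m.+1) u i.+1 * ps_inv (m - i)%N.
  rewrite /ps_inv /= nth_rcons size_inv_coefs ltnn eqxx; congr (_ * _).
  by apply: eq_bigr => i _; rewrite nth_inv_coefs ?leq_subr.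
by rewrite mulrA mulrN mulfV // mulN1r addNr.
Qed.

End Inverse.

Lemma val_ge_dvd (k : fieldType) (g h : ps k) v K :
  is_val g v -> val_ge h (v + K) -> exists q, h = g * q /\ val_ge q K.
Proof.
move=> gv hv; have u0 : ps_shift v g 0%N != 0 by case: gv.
exists (ps_shift v h * ps_inv (ps_shift v g)); split.
  rewrite {1}(ps_shiftK (is_val_ge gv)) -mulrA (mulrCA (ps_shift v g)) (mul_ps_inv u0) mulr1.
  by apply: ps_shiftK; apply: val_geW hv; rewrite leq_addr.
by apply: val_geMl => j lt; apply: hv; lia.
Qed.

Section Subalgebra.
Variables (k : fieldType) (R : ps k -> Prop).
Hypothesis HR : ksubalg R.
Implicit Types f g h : ps k.

Lemma ksubalgC c : R (pC c). Proof. by case: HR. Qed.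
Lemma ksubalg0 : R 0. Proof. exact: ksubalgC. Qed.
Lemma ksubalg1 : R 1. Proof. exact: ksubalgC. Qed.
Lemma ksubalgD f g : R f -> R g -> R (f + g). Proof. by case: HR => _ [addR _]; apply: addR. Qed.
Lemma ksubalgN f : R f -> R (- f). Proof. by case: HR => _ [_ [oppR _]]; apply: oppR. Qed.
Lemma ksubalgB f g : R f -> R g -> R (f - g).
Proof. by move=> Rf Rg; apply: ksubalgD Rf (ksubalgN Rg). Qed.
Lemma ksubalgM f g : R f -> R g -> R (f * g).
Proof. by case: HR => _ [_ [_ mulR]]; apply: mulR. Qed.

Lemma ksubalg_sum I (r : seq I) (P : pred I) (F : I -> ps k) :
  (forall i, P i -> R (F i)) -> R (\sum_(i <- r | P i) F i).
Proof. by move=> RF; apply: big_ind => //; [exact: ksubalg0|exact: ksubalgD]. Qed.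

Lemma ksubalg_prod I (r : seq I) (P : pred I) (F : I -> ps k) :
  (forall i, P i -> R (F i)) -> R (\prod_(i <- r | P i) F i).
Proof. by move=> RF; apply: big_ind => //; [exact: ksubalg1|exact: ksubalgM]. Qed.

Lemma ksubalgX f m : R f -> R (f ^+ m).
Proof. by move=> Rf; elim: m => [|m IH]; [exact: ksubalg1|rewrite exprS; apply: ksubalgM]. Qed.

Lemma maxid0 : maxid R 0. Proof. by split; [exact: ksubalg0|]. Qed.

Lemma maxidD f g : maxid R f -> maxid R g -> maxid R (f + g).
Proof. by move=> [Rf f0] [Rg g0]; split; [apply: ksubalgD|rewrite psD f0 g0 addr0]. Qed.

Lemma maxidMr f g : maxid R f -> R g -> maxid R (f * g).
Proof. by move=> [Rf f0] Rg; split; [apply: ksubalgM|rewrite psM big_ord1 f0 mul0r]. Qed.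

Lemma maxid_sum I (r : seq I) (P : pred I) (F : I -> ps k) :
  (forall i, P i -> maxid R (F i)) -> maxid R (\sum_(i <- r | P i) F i).
Proof. by move=> mF; apply: big_ind => //; [exact: maxid0|exact: maxidD]. Qed.

Lemma mpowSE m f : mpow R m.+1 f <-> exists d (u w : 'I_d -> ps k),
   (forall j, mpow R m (u j) /\ maxid R (w j)) /\ f = \sum_j u j * w j.
Proof. by split=> -[d [u [w [uw ->]]]]; exists d, u, w; rewrite psumE. Qed.

Lemma mpow_ksubalg m f : mpow R m f -> R f.
Proof.
elim: m f => // m IH f /mpowSE [d [u [w [uw ->]]]].
by apply: ksubalg_sum => j _; have [/IH Ru [Rw _]] := uw j; apply: ksubalgM.
Qed.

Lemma mpowS_maxid m f : mpow R m.+1 f -> maxid R f.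
Proof.
move=> /mpowSE [d [u [w [uw ->]]]]; apply: maxid_sum => j _.
by have [/mpow_ksubalg Ru mw] := uw j; rewrite mulrC; apply: maxidMr.
Qed.

Lemma mpow0 m : mpow R m 0.
Proof.
case: m => [|m]; first exact: ksubalg0.
by apply/mpowSE; exists 0%N, (fun _ => 0), (fun _ => 0); split; [case|rewrite big_ord0].
Qed.

Lemma mpowD m f g : mpow R m f -> mpow R m g -> mpow R m (f + g).
Proof.
case: m => [|m]; first exact: ksubalgD.
move=> /mpowSE [d1 [u1 [w1 [uw1 ->]]]] /mpowSE [d2 [u2 [w2 [uw2 ->]]]].
apply/mpowSE; exists (d1 + d2)%N.
exists (fun j => match split j with inl j1 => u1 j1 | inr j2 => u2 j2 end).
exists (fun j => match split j with inl j1 => w1 j1 | inr j2 => w2 j2 end).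
split; first by move=> j; case: (split j).
rewrite big_split_ord; congr (_ + _); apply: eq_bigr => j _.
  by rewrite -[lshift _ _]/(unsplit (inl j)) unsplitK.
by rewrite -[rshift _ _]/(unsplit (inr j)) unsplitK.
Qed.

Lemma mpow_sum m I (r : seq I) (P : pred I) (F : I -> ps k) :
  (forall i, P i -> mpow R m (F i)) -> mpow R m (\sum_(i <- r | P i) F i).
Proof. by move=> mF; apply: big_ind => //; [exact: mpow0|exact: mpowD]. Qed.

Lemma mpowSM m u w : mpow R m u -> maxid R w -> mpow R m.+1 (u * w).
Proof.
move=> mu mw; apply/mpowSE; exists 1%N, (fun _ => u), (fun _ => w).
by split=> //; rewrite big_ord1.
Qed.

Lemma mpowMr m f g : mpow R m f -> R g -> mpow R m (f * g).
Proof.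
case: m => [|m]; first exact: ksubalgM.
move=> /mpowSE [d [u [w [uw ->]]]] Rg; rewrite mulr_suml; apply: mpow_sum => j _.
by have [mu mw] := uw j; rewrite -mulrA; apply: mpowSM mu (maxidMr mw Rg).
Qed.

Lemma mpowS_sub m f : mpow R m.+1 f -> mpow R m f.
Proof.
move=> /mpowSE [d [u [w [uw ->]]]]; apply: mpow_sum => j _.
by have [mu [Rw _]] := uw j; apply: mpowMr.
Qed.

Lemma mpowCM m c f : mpow R m f -> mpow R m (pC c * f).
Proof. by move=> mf; rewrite mulrC; apply: mpowMr mf (ksubalgC c). Qed.

Lemma mpow2M f g : maxid R f -> maxid R g -> mpow R 2 (f * g).
Proof.
by move=> mf mg; apply: mpowSM mg; rewrite -[f]mul1r; apply: mpowSM mf; apply: ksubalg1.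
Qed.

Lemma mpow_val_ge e m f :
  (forall g, maxid R g -> val_ge g e) -> mpow R m f -> val_ge f (m * e).
Proof.
move=> me; elim: m f => [|m IH] f; first by move=> _ j; rewrite mul0n.
move=> /mpowSE [d [u [w [uw ->]]]]; apply: val_ge_sum => j _.
by have [/IH vu /me vw] := uw j; rewrite mulSn addnC; apply: val_geM.
Qed.

End Subalgebra.

(** * Polynomial expressions in the [x_i] *)

Section PolyExpr.
Variables (k : fieldType) (x : nat -> ps k).
Implicit Types f g h : ps k.

Definition xmon i (b : {ffun 'I_i -> nat}) : ps k := @monom k i x b.

(* [k[x_1, ..., x_i]] as finite sums of monomials with coefficients; unlike
   [poly_in], the exponents are not bounded in advance. *)
Definition poly_expr i f := exists s : seq (k * {ffun 'I_i -> nat}),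
  f = \sum_(q <- s) pC q.1 * xmon q.2.

Lemma xmonE i (b : {ffun 'I_i -> nat}) : xmon b = \prod_(j < i) x j.+1 ^+ b j.
Proof. exact: monomE. Qed.

Lemma xmonD i (b c : {ffun 'I_i -> nat}) : xmon [ffun j => b j + c j] = xmon b * xmon c.
Proof. by rewrite !xmonE -big_split; apply: eq_bigr => j _; rewrite ffunE exprD. Qed.

Lemma xmon0 i : xmon [ffun j : 'I_i => 0%N] = 1.
Proof. by rewrite xmonE big1 // => j _; rewrite ffunE expr0. Qed.

Lemma poly_exprC i c : poly_expr i (pC c).
Proof. by exists [:: (c, [ffun _ => 0%N])]; rewrite big_seq1 xmon0 mulr1. Qed.

Lemma poly_expr0 i : poly_expr i 0.
Proof. exact: poly_exprC. Qed.

Lemma poly_exprD i f g : poly_expr i f -> poly_expr i g -> poly_expr i (f + g).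
Proof. by move=> [s1 ->] [s2 ->]; exists (s1 ++ s2); rewrite big_cat. Qed.

Lemma poly_exprM i f g : poly_expr i f -> poly_expr i g -> poly_expr i (f * g).
Proof.
move=> [s1 ->] [s2 ->].
pose T := (k * {ffun 'I_i -> nat})%type.
exists [seq (q1.1 * q2.1, [ffun j => q1.2 j + q2.2 j]) | q1 : T <- s1, q2 : T <- s2].
rewrite big_allpairs_dep big_distrl; apply: eq_bigr => q1 _.
by rewrite big_distrr; apply: eq_bigr => q2 _ /=; rewrite xmonD pCM; ring.
Qed.

Lemma poly_expr_x i j : (1 <= j <= i)%N -> poly_expr i (x j).
Proof.
case: j => // j /andP [_ lt_ji].
exists [:: (1, [ffun l : 'I_i => (l == j :> nat) : nat])].
rewrite big_seq1 /= mul1r xmonE (bigD1 (Ordinal lt_ji)) //= ffunE eqxx expr1.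
rewrite big1 ?mulr1 // => l ne_lj; rewrite ffunE (_ : (_ == j) = false) ?expr0 //.
by apply: contraNF ne_lj => /eqP lj; apply/eqP/val_inj.
Qed.

Definition widen_exps i i' (b : {ffun 'I_i -> nat}) : {ffun 'I_i' -> nat} :=
  [ffun j : 'I_i' => if @insub _ (fun m => (m < i)%N) 'I_i j is Some j0 then b j0 else 0%N].

Lemma xmon_widen i i' (b : {ffun 'I_i -> nat}) : (i <= i')%N -> xmon (widen_exps i' b) = xmon b.
Proof.
move=> le_ii'; rewrite !xmonE.
pose G (j : nat) := if @insub _ (fun m => (m < i)%N) 'I_i j is Some j0 then x j.+1 ^+ b j0 else 1.
transitivity (\prod_(j < i') G j).
  by apply: eq_bigr => j _; rewrite ffunE /G; case: insub => // _; rewrite expr0.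
transitivity (\prod_(j < i) G j); last by apply: eq_bigr => j _; rewrite /G valK.
rewrite (big_ord_widen _ G le_ii') [RHS]big_mkcond /=.
by apply: eq_bigr => j _; case: ifP => // /negbT ge_ji; rewrite /G insubN.
Qed.

Lemma poly_expr_widen i i' f : (i <= i')%N -> poly_expr i f -> poly_expr i' f.
Proof.
move=> le_ii' [s ->]; exists [seq (q.1, widen_exps i' q.2) | q <- s]; rewrite big_map.
by apply: eq_bigr => q _; rewrite xmon_widen.
Qed.

Definition ord_exps i N (al : {ffun 'I_i -> 'I_N}) : {ffun 'I_i -> nat} :=
  [ffun j => nat_of_ord (al j)].

Lemma ord_exps_inj i N : injective (@ord_exps i N).
Proof.
move=> al be /ffunP eq_ab; apply/ffunP => j; apply: val_inj.
by have := eq_ab j; rewrite !ffunE.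
Qed.

Lemma ord_exps_surj i N (b : {ffun 'I_i -> nat}) :
  (forall j, (b j <= N)%N) -> exists al : {ffun 'I_i -> 'I_N.+1}, ord_exps al = b.
Proof.
by move=> le_bN; exists [ffun j => inord (b j)]; apply/ffunP => j; rewrite !ffunE inordK ?ltnS.
Qed.

Lemma xmon_ord_exps i N (al : {ffun 'I_i -> 'I_N}) :
  xmon (ord_exps al) = @monom k i x (fun j => al j).
Proof. by apply: eq_bigr => j _; rewrite ffunE. Qed.

Lemma coef_sum_xmon i (s : seq (k * {ffun 'I_i -> nat})) m :
  (\sum_(q <- s) pC q.1 * xmon q.2) m = \sum_(q <- s) q.1 * xmon q.2 m.
Proof. by rewrite ps_sum; apply: eq_bigr => q _; rewrite psCM. Qed.

Lemma sum_group_exps i (G : finType) (em : G -> {ffun 'I_i -> nat}) (em_inj : injective em)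
    (s : seq (k * {ffun 'I_i -> nat})) (M : {ffun 'I_i -> nat} -> k) :
  (forall q, q \in s -> (forall t, em t != q.2) -> M q.2 = 0) ->
  \sum_(t : G) (\sum_(q <- s | q.2 == em t) q.1) * M (em t) = \sum_(q <- s) q.1 * M q.2.
Proof.
move=> M0.
transitivity (\sum_(t : G) \sum_(q <- s) (if q.2 == em t then q.1 * M q.2 else 0)).
  apply: eq_bigr => t _; rewrite big_mkcond mulr_suml; apply: eq_bigr => q _.
  by case: eqP => [->|_]; rewrite ?mul0r.
rewrite exchange_big /= big_seq [RHS]big_seq; apply: eq_bigr => q qs.
have [/existsP [t /eqP <-]|no_t] := boolP [exists t, em t == q.2].
  rewrite (bigD1 t) //= eqxx big1 ?addr0 // => t' ne_t't; case: eqP => // /em_inj eq_t.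
  by rewrite eq_t eqxx in ne_t't.
rewrite big1 => [|t _]; last by case: eqP => // eq_t; case/existsP: no_t; exists t; rewrite eq_t.
by rewrite M0 ?mulr0 // => t; apply: contraNneq no_t => eq_t; apply/existsP; exists t; rewrite eq_t.
Qed.

Lemma poly_expr_poly_in i f : poly_expr i f -> poly_in i x f.
Proof.
move=> [s ->]; pose N := \max_(q <- s) \max_(j < i) q.2 j.
exists N.+1, (fun al => \sum_(q <- s | q.2 == ord_exps al) q.1).
apply: funext => m; rewrite coef_sum_xmon.
rewrite -(sum_group_exps (@ord_exps_inj i N.+1) (M := fun b => xmon b m)).
  by apply: eq_bigr => al _; rewrite xmon_ord_exps.
move=> q qs no_al; have [j|al eq_al] := @ord_exps_surj i N q.2.
  by apply: leq_trans (leq_bigmax_seq _ qs isT); apply: leq_bigmax.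
by have := no_al al; rewrite eq_al eqxx.
Qed.

Section PositiveValuations.
Variable i : nat.
Hypothesis x_pos : forall j, (1 <= j <= i)%N -> val_ge (x j) 1.

Lemma val_ge_xmon (b : {ffun 'I_i -> nat}) j : val_ge (xmon b) (b j).
Proof.
rewrite xmonE (bigD1 j) //=; apply: val_geMl.
elim: (b j) => [|m IH]; first by move=> l.
by rewrite exprS -[m.+1]add1n; apply: val_geM _ IH; apply: x_pos; rewrite /= ltn_ord.
Qed.

(* Some exponent of [b] exceeds [m], and every [x_j] has positive valuation. *)
Lemma xmon_coef_eq0 m (b : {ffun 'I_i -> nat}) :
  (forall al : {ffun 'I_i -> 'I_m.+1}, ord_exps al != b) -> xmon b m = 0.
Proof.
move=> no_al; have [j lt_mb] : exists j, (m < b j)%N.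
  apply/not_existsP => small_b; have [j|al eq_al] := @ord_exps_surj i m b.
    by rewrite leqNgt; apply/negP => /(small_b j).
  by have := no_al al; rewrite eq_al eqxx.
exact: val_ge_xmon lt_mb.
Qed.

Lemma poly_expr_pwrseries_in f : poly_expr i f -> pwrseries_in i x f.
Proof.
move=> [s ->]; exists (fun b => \sum_(q <- s | q.2 == b) q.1).
apply: funext => m; rewrite coef_sum_xmon.
rewrite -(sum_group_exps (@ord_exps_inj i m.+1) (M := fun b => xmon b m)).
  by apply: eq_bigr => al _; rewrite xmon_ord_exps.
by move=> q _ no_al; apply: xmon_coef_eq0.
Qed.

Lemma pwrseries_trunc (F : {ffun 'I_i -> nat} -> k) M :
  exists p, poly_expr i p /\ forall m, (m < M)%N -> p m = series_subst x F m.
Proof.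
pose s := [seq (F (ord_exps al), ord_exps al) | al <- enum {: {ffun 'I_i -> 'I_M}}].
exists (\sum_(q <- s) pC q.1 * xmon q.2); split; first by exists s.
move=> m lt_mM; rewrite coef_sum_xmon.
rewrite -(sum_group_exps (@ord_exps_inj i m.+1) (M := fun b => xmon b m)); last first.
  by move=> q _ no_al; apply: xmon_coef_eq0.
apply: eq_bigr => al _; rewrite xmon_ord_exps; congr (_ * _).
pose al' : {ffun 'I_i -> 'I_M} := [ffun j => widen_ord lt_mM (al j)].
have eq_al' : ord_exps al' = ord_exps al by apply/ffunP => j; rewrite !ffunE.
rewrite big_map big_enum_cond /= (big_pred1 al') ?eq_al' // => be /=.
by rewrite -eq_al'; apply/eqP/eqP => [/ord_exps_inj|->].
Qed.

End PositiveValuations.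
End PolyExpr.

Section MaximalIdeal.
Variables (k : fieldType) (R : ps k -> Prop).
Implicit Types f g h : ps k.

Lemma vset_maxid_gt0 s : vset (maxid R) s -> (0 < s)%N.
Proof. by case: s => // -[f [_ f0] [f0' _]]; rewrite f0 eqxx in f0'. Qed.

Lemma maxid_val_ge e :
  (forall s, vset (maxid R) s -> (e <= s)%N) -> forall g, maxid R g -> val_ge g e.
Proof.
move=> min_e g mg; have [->|g_neq0] := eqVneq g 0; first exact: val_ge0.
have [s gs] := exists_is_val g_neq0.
exact: val_geW (min_e s (ex_intro2 _ _ g mg gs)) (is_val_ge gs).
Qed.

Hypothesis HR : ksubalg R.
Hypothesis Hbir : birational R.

(* If [m] were [0], then [R = k] and [t] would not lie in [Frac R]. *)
Lemma exists_maxid_neq0 : exists2 f, maxid R f & f != 0.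
Proof.
have [//|no_f] := pselect (exists2 f, maxid R f & f != 0); exfalso.
have const_R g : R g -> g = pC (g 0%N).
  move=> Rg; apply/eqP; rewrite -subr_eq0; apply: contraT => nz; case: no_f.
  exists (g - pC (g 0%N)) => //; split; first exact: (ksubalgB HR Rg (ksubalgC HR _)).
  by rewrite psB subrr.
have [f [b [Rf [Rb [[j bj] tb]]]]] := Hbir (tpow k 1).
have b0 : b 0%N != 0 by apply: contraNneq bj => b00; rewrite (const_R _ Rb) b00; case: j.
have := congr1 (fun f => f 1%N) tb; rewrite pmulE tpowM /= (const_R _ Rf) /= => b0_eq0.
by rewrite b0_eq0 eqxx in b0.
Qed.

Lemma exists_min_vset_maxid :
  exists e, vset (maxid R) e /\ forall s, vset (maxid R) s -> (e <= s)%N.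
Proof.
have [f mf f_neq0] := exists_maxid_neq0; have [s fs] := exists_is_val f_neq0.
have ex_e : exists e, `[< vset (maxid R) e >] by exists s; apply/asboolP; exists f.
case: (ex_minnP ex_e) => e /asboolP me min_e; exists e; split=> // t mt.
by apply/min_e/asboolP.
Qed.

End MaximalIdeal.

Lemma first_neq0 (T : eqType) (d : nat -> T) z i :
  (forall j, (j < i)%N -> d j = z) \/
  exists2 j0, (j0 < i)%N & d j0 != z /\ forall j, (j < j0)%N -> d j = z.
Proof.
have [ex_j|no_j] := pselect (exists j, (j < i)%N && (d j != z)); last first.
  by left=> j lt_ji; apply/eqP; apply: contra_notT no_j => dj; exists j; rewrite lt_ji.
right; case: (ex_minnP ex_j) => j0 /andP [lt_j0i dj0] min_j0; exists j0 => //; split=> // j lt_jj0.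
apply/eqP; apply: contraTT (lt_jj0) => dj.
by rewrite -leqNgt min_j0 // dj (ltn_trans lt_jj0).
Qed.

Section HerzogKunz.
Variables (k : fieldType) (R : ps k -> Prop) (n : nat) (a : nat -> nat) (x : nat -> ps k).
Hypothesis HR : ksubalg R.
Hypothesis Hbir : birational R.
Hypothesis Hhk : hk_seq R n a.
Hypothesis Hx : forall i, (1 <= i <= n)%N -> R (x i) /\ is_val (x i) (a i).
Implicit Types f g h p : ps k.

Lemma hk_vsetP s :
  vset (maxid R) s /\ ~ vset (mpow R 2) s <-> exists2 i, (1 <= i <= n)%N & a i = s.
Proof. by case: Hhk. Qed.

Lemma hk_vset i : (1 <= i <= n)%N -> vset (maxid R) (a i) /\ ~ vset (mpow R 2) (a i).
Proof. by move=> lein; apply/hk_vsetP; exists i. Qed.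

Lemma hk_ltn i j : (1 <= i)%N -> (i < j)%N -> (j <= n)%N -> (a i < a j)%N.
Proof. by case: Hhk => lt_a _; apply: lt_a. Qed.

Lemma hk_leq i j : (1 <= i)%N -> (i <= j)%N -> (j <= n)%N -> (a i <= a j)%N.
Proof.
move=> i_gt0; rewrite leq_eqVlt => /predU1P [-> //|lt_ij] le_jn.
exact/ltnW/hk_ltn.
Qed.

(* The least valuation [e] in [m] is not in [v(m^2)], whose elements are [>= 2e]. *)
Lemma hk_first : (0 < n)%N /\ vset (maxid R) (a 1%N) /\
  (forall s, vset (maxid R) s -> (a 1%N <= s)%N).
Proof.
have [e [me min_e]] := exists_min_vset_maxid HR Hbir.
have e_gt0 := vset_maxid_gt0 me.
have not_m2 : ~ vset (mpow R 2) e.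
  move=> [f m2f fe]; have := is_val_leq fe (mpow_val_ge (maxid_val_ge min_e) m2f).
  by rewrite mul2n -addnn; lia.
have [i /andP [i_gt0 le_in] ai] := (hk_vsetP e).1 (conj me not_m2).
have n_gt0 : (0 < n)%N := leq_trans i_gt0 le_in.
have a1_le : (a 1%N <= e)%N by rewrite -ai; apply: hk_leq.
have [ma1 _] := hk_vset (n_gt0 : (1 <= 1 <= n)%N).
suff -> : a 1%N = e by [].
by apply/eqP; rewrite eqn_leq a1_le min_e.
Qed.

Lemma x_maxid i : (1 <= i <= n)%N -> maxid R (x i).
Proof.
move=> lein; have [Rx [_ vx]] := Hx lein; split=> //.
by apply: vx; apply: vset_maxid_gt0 (hk_vset lein).1.
Qed.

Lemma x_val_ge1 i j : (i <= n)%N -> (1 <= j <= i)%N -> val_ge (x j) 1.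
Proof.
move=> le_in /andP [j_gt0 le_ji] l; rewrite ltnS leqn0 => /eqP ->.
by have [] := x_maxid (i := j); rewrite ?j_gt0 ?(leq_trans le_ji).
Qed.

Lemma poly_expr_ksubalg i f : (i <= n)%N -> poly_expr x i f -> R f.
Proof.
move=> le_in [s ->]; apply: (ksubalg_sum HR) => // q _.
apply: (ksubalgM HR (ksubalgC HR _)); rewrite xmonE.
apply: (ksubalg_prod HR) => // j _; apply: (ksubalgX HR).
by have [] := Hx (i := j.+1); rewrite // (leq_trans _ le_in) ?ltn_ord.
Qed.

(** * Approximation by polynomials in the [x_i] with [a_i <= l] *)

Definition hk_index l := (\max_(1 <= i < n.+1 | (a i <= l)%N) i)%N.

Lemma hk_index_le l : (hk_index l <= n)%N.
Proof. by apply/bigmax_leqP_seq => i; rewrite mem_index_iota => /andP []. Qed.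

Lemma leq_hk_index l j : (1 <= j <= n)%N -> (a j <= l)%N -> (j <= hk_index l)%N.
Proof. by move=> lejn le_al; apply: (leq_bigmax_seq (F := id)); rewrite // mem_index_iota ltnS. Qed.

Lemma hk_index_leP l i :
  (forall j, (1 <= j <= n)%N -> (a j <= l)%N -> (j <= i)%N) -> (hk_index l <= i)%N.
Proof. by move=> le_ji; apply/bigmax_leqP_seq => j; rewrite mem_index_iota ltnS; apply: le_ji. Qed.

Lemma le_hk_index l l' : (l' <= l)%N -> (hk_index l' <= hk_index l)%N.
Proof.
by move=> le_l'l; apply: hk_index_leP => j lejn le_al'; apply: leq_hk_index (leq_trans _ le_l'l).
Qed.

Definition approximable l f := exists p, poly_expr x (hk_index l) p /\ val_ge (f - p) l.+1.

Lemma approximable_poly_expr l p : poly_expr x (hk_index l) p -> approximable l p.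
Proof. by exists p; rewrite subrr; split=> //; apply: val_ge0. Qed.

Lemma approximable_val_ge l f : val_ge f l.+1 -> approximable l f.
Proof. by exists 0; rewrite subr0; split=> //; apply: poly_expr0. Qed.

Lemma approximableD l f g : approximable l f -> approximable l g -> approximable l (f + g).
Proof.
move=> [p [pp vfp]] [q [pq vgq]]; exists (p + q); split; first exact: poly_exprD.
by rewrite opprD addrACA; apply: val_geD.
Qed.

Lemma approximableCM l c f : approximable l f -> approximable l (pC c * f).
Proof.
move=> [p [pp vfp]]; exists (pC c * p); split; first by apply/poly_exprM/pp/poly_exprC.
by rewrite -mulrBr; apply: val_geCM.
Qed.

Section ApproximationStep.
Variable l : nat.
Hypothesis approx_lt : forall l', (l' < l)%N -> forall f, R f -> approximable l' f.

(* A product [u w] of elements of [m] is approximated by the product of the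
   approximations of [u] and [w] at level [l - a_1]. *)
Lemma approximable_mpow2 h : mpow R 2 h -> approximable l h.
Proof.
have [_ [ma1 min_a1]] := hk_first; set e := a 1%N in ma1 min_a1.
have e_gt0 := vset_maxid_gt0 ma1; have me := maxid_val_ge min_a1.
move=> m2h; have [lt_l2e|le_2el] := ltnP l (2 * e).
  by apply/approximable_val_ge/(val_geW lt_l2e)/(mpow_val_ge me m2h).
move/mpowSE: m2h => [d [u [w [uw ->]]]].
apply: (big_ind (approximable l)); [|exact: approximableD|].
  by apply: approximable_val_ge; apply: val_ge0.
move=> j _; have [/(mpowS_maxid HR) mu mw] := uw j.
have lt_l : (l - e < l)%N by lia.
have [P [pP vP]] := approx_lt lt_l (proj1 mu).
have [Q [pQ vQ]] := approx_lt lt_l (proj1 mw).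
exists (P * Q); split.
  have le_hk : (hk_index (l - e) <= hk_index l)%N by apply/le_hk_index/leq_subr.
  by apply: poly_exprM; [apply: poly_expr_widen le_hk pP|apply: poly_expr_widen le_hk pQ].
rewrite (_ : l.+1 = (l - e).+1 + e)%N; last by lia.
by apply: val_ge_subM => //; [lia|apply: me|apply: me].
Qed.

Lemma approximable_vset N : (N <= l)%N -> vset R N ->
  exists h, [/\ R h, is_val h N & approximable l h].
Proof.
move=> le_Nl [g Rg gN]; case: N le_Nl gN => [|N] le_Nl gN.
  by exists 1; split; [apply: (ksubalg1 HR)|apply: is_val1|apply/approximable_poly_expr/poly_exprC].
have mg : vset (maxid R) N.+1 by exists g => //; split=> //; apply: (is_val_ge gN).
have [[h m2h hN]|not_m2] := pselect (vset (mpow R 2) N.+1).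
  by exists h; split=> //; [apply: (mpow_ksubalg HR) m2h|apply: approximable_mpow2].
have [j lejn aj] := (hk_vsetP N.+1).1 (conj mg not_m2).
have [Rx xj] := Hx lejn.
exists (x j); split; rewrite -?aj //; apply/approximable_poly_expr/poly_expr_x.
by rewrite (leq_hk_index lejn) ?aj // andbT; case/andP: lejn.
Qed.

(* Downward induction on the valuation [l + 1 - d] of [f]: the leading term is
   removed with an approximable element of the same valuation. *)
Lemma approximable_level f : R f -> approximable l f.
Proof.
suff approx_ge d : forall f, R f -> val_ge f (l.+1 - d) -> approximable l f.
  by move=> Rf; apply: (approx_ge l.+1) => // j; rewrite subnn.
elim: d => [|d IH] {}f Rf vf; first by apply: approximable_val_ge; rewrite subn0 in vf.
have [le_ld|lt_dl] := leqP l.+1 d; first by apply: IH => // j; rewrite (eqP le_ld).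
have [vf'|fN] := val_geS_or_is_val vf.
  by apply: IH => //; rewrite -(subnSK lt_dl).
have le_Nl : (l.+1 - d.+1 <= l)%N by lia.
have [h [Rh hN ah]] := approximable_vset le_Nl (ex_intro2 _ _ f Rf fN).
rewrite -(subrK (pC (f (l.+1 - d.+1)%N / h (l.+1 - d.+1)%N) * h) f).
apply/approximableD/approximableCM/ah; apply: IH.
  exact: (ksubalgB HR Rf (ksubalgM HR (ksubalgC HR _) Rh)).
by rewrite -(subnSK lt_dl); apply: val_ge_sub_lead.
Qed.

End ApproximationStep.

Lemma approximable_all l f : R f -> approximable l f.
Proof. by elim/ltn_ind: l f => l IH f; apply: approximable_level. Qed.

(** * The values of [k[[x_1, ..., x_i]]] *)

Section LinearPart.
Variable i : nat.
Hypothesis le_in : (i <= n)%N.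

Definition xlin (d : nat -> k) := \sum_(j < i) pC (d j) * x j.+1.

Definition lin_decomp p := exists c d h, mpow R 2 h /\ p = pC c + xlin d + h.

Lemma maxid_xlin d : maxid R (xlin d).
Proof.
apply: (maxid_sum HR) => j _; rewrite mulrC; apply: (maxidMr HR _ (ksubalgC HR _)).
by apply: x_maxid; rewrite /= (leq_trans _ le_in) ?ltn_ord.
Qed.

Lemma xlinD d1 d2 : xlin (fun j => d1 j + d2 j) = xlin d1 + xlin d2.
Proof. by rewrite -big_split; apply: eq_bigr => j _; rewrite pCD mulrDl. Qed.

Lemma xlinCM c d : xlin (fun j => c * d j) = pC c * xlin d.
Proof. by rewrite mulr_sumr; apply: eq_bigr => j _; rewrite pCM mulrA. Qed.

Lemma lin_decompC c : lin_decomp (pC c).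
Proof.
exists c, (fun _ => 0), 0; split; first exact: (mpow0 HR).
by rewrite /xlin big1 ?addr0 // => j _; rewrite pC0 mul0r.
Qed.

Lemma lin_decompD p q : lin_decomp p -> lin_decomp q -> lin_decomp (p + q).
Proof.
move=> [c [d [h [m2h ->]]]] [c' [d' [h' [m2h' ->]]]].
exists (c + c'), (fun j => d j + d' j), (h + h'); split; first exact: (mpowD HR).
by rewrite pCD xlinD; ring.
Qed.

Lemma lin_decompM p q : lin_decomp p -> lin_decomp q -> lin_decomp (p * q).
Proof.
move=> [c [d [h [m2h ->]]]] [c' [d' [h' [m2h' ->]]]].
have [Rl Rl'] := (proj1 (maxid_xlin d), proj1 (maxid_xlin d')).
exists (c * c'), (fun j => c * d' j + c' * d j).
exists (xlin d * xlin d' + h' * (xlin d + pC c) + h * (pC c' + xlin d' + h')); split.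
  apply: (mpowD HR); first apply: (mpowD HR).
  - exact: (mpow2M HR) (maxid_xlin d) (maxid_xlin d').
  - exact: (mpowMr HR m2h' (ksubalgD HR Rl (ksubalgC HR c))).
  - apply: (mpowMr HR m2h); apply: (ksubalgD HR _ (mpow_ksubalg HR m2h')).
    exact: (ksubalgD HR (ksubalgC HR c') Rl').
by rewrite xlinD !xlinCM pCM; ring.
Qed.

Lemma lin_decomp_x j : (1 <= j <= i)%N -> lin_decomp (x j).
Proof.
case: j => // j /andP [_ lt_ji].
exists 0, (fun l => (l == j)%:R), 0; split; first exact: (mpow0 HR).
rewrite /xlin (bigD1 (Ordinal lt_ji)) //= eqxx pC1 mul1r big1 ?pC0; first by ring.
move=> l ne_lj; rewrite (_ : (_ == j) = false) ?pC0 ?mul0r //.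
by apply: contraNF ne_lj => /eqP lj; apply/eqP/val_inj.
Qed.

Lemma poly_expr_lin_decomp p : poly_expr x i p -> lin_decomp p.
Proof.
have lin_decompX f m : lin_decomp f -> lin_decomp (f ^+ m).
  by move=> df; elim: m => [|m IH]; [exact: lin_decompC 1|rewrite exprS; apply: lin_decompM].
move=> [s ->]; apply: (big_ind lin_decomp) => //; [exact: lin_decompC 0|exact: lin_decompD|].
move=> q _; apply: lin_decompM; first exact: lin_decompC.
rewrite xmonE.
apply: (big_ind lin_decomp) => //; [exact: lin_decompC 1|exact: lin_decompM|] => j _.
by apply: lin_decompX; apply: lin_decomp_x; rewrite /= ltn_ord.
Qed.

Lemma is_val_xlin d j0 : (j0 < i)%N -> d j0 != 0 -> (forall j, (j < j0)%N -> d j = 0) ->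
  is_val (xlin d) (a j0.+1).
Proof.
move=> lt_j0i dj0 d0; apply: (is_val_sum (j0 := Ordinal lt_j0i)).
  by apply/is_valCM/(Hx _).2; rewrite //= (leq_trans lt_j0i).
move=> j ne_jj0; have [->|dj] := eqVneq (d j) 0; first by rewrite pC0 mul0r; apply: val_ge0.
have lt_j0j : (j0 < j)%N.
  rewrite ltn_neqAle leqNgt (contra (fun lt => introT eqP (d0 j lt)) dj) andbT.
  by apply: contraNneq ne_jj0 => eq_j; apply/eqP/val_inj; rewrite /= eq_j.
have le_jn : (j.+1 <= n)%N by rewrite (leq_trans _ le_in) ?ltn_ord.
by apply/val_geCM/(val_geW _ (is_val_ge (Hx _).2)); [apply: hk_ltn|rewrite le_jn].
Qed.

(* Modulo [m^2] a polynomial in the [x_j] is linear in them, and a nonzero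
   linear form has valuation some [a_j]. *)
Lemma poly_expr_hk_vset p s : poly_expr x i p -> is_val p s -> (0 < s)%N ->
  ~ vset (mpow R 2) s -> exists2 j, (1 <= j <= i)%N & a j = s.
Proof.
move=> pp ps s_gt0 not_m2; have [c [d [h [m2h eq_p]]]] := poly_expr_lin_decomp pp.
have c0 : c = 0.
  have := congr1 (fun f => f 0%N) eq_p; rewrite /= !psD (proj2 (maxid_xlin d)).
  by rewrite (proj2 (mpowS_maxid HR m2h)) (is_val_ge ps) // addr0 addr0.
have [no_d|[j0 lt_j0i [dj0 d0]]] := first_neq0 d 0 i.
  suff eq_ph : p = h by exfalso; apply: not_m2; exists h => //; rewrite -eq_ph.
  by rewrite eq_p c0 /xlin big1 ?add0r // => j _; rewrite no_d // pC0 mul0r.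
have lin_j0 := is_val_xlin lt_j0i dj0 d0.
have [eq_s|ne_s] := eqVneq (a j0.+1) s; first by exists j0.+1.
have [_ not_m2'] := hk_vset (i := j0.+1) (leq_trans lt_j0i le_in).
have hv : is_val h (minn s (a j0.+1)).
  rewrite (_ : h = p - xlin d); last by rewrite eq_p c0 pC0 add0r addrAC subrr add0r.
  by apply: is_valB_neq ps lin_j0 _; rewrite eq_sym.
by exfalso; case: leqP hv => _ hv; [apply: not_m2|apply: not_m2']; exists h.
Qed.

End LinearPart.

Lemma hk_notin_pwrseries i : (1 <= i <= n.-1)%N -> ~ vset (pwrseries_in i x) (a i.+1).
Proof.
move=> /andP [i_gt0 le_in1] [f [F ->] fs]; have lt_in : (i < n)%N by lia.
have [p [pp eq_p]] := pwrseries_trunc (fun j => @x_val_ge1 i j (ltnW lt_in)) F (a i.+1).+1.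
have ps : is_val p (a i.+1).
  case: fs => fs vf; split=> [|j lt_js]; first by rewrite eq_p.
  by rewrite eq_p ?vf // ltnW.
have [ma not_m2] := hk_vset (i := i.+1) lt_in.
have [j /andP [j_gt0 le_ji] aj] := poly_expr_hk_vset (ltnW lt_in) pp ps (vset_maxid_gt0 ma) not_m2.
by have := hk_ltn j_gt0 (leq_ltn_trans le_ji (ltnSn i)) lt_in; rewrite aj ltnn.
Qed.

Lemma vset_pwrseries_lt i s : (i < n)%N -> vset R s -> (s < a i.+1)%N ->
  vset (pwrseries_in i x) s.
Proof.
move=> lt_in [g Rg gs] lt_sa; have [p [pp vgp]] := approximable_all s Rg.
have le_hk : (hk_index s <= i)%N.
  apply: hk_index_leP => j /andP [j_gt0 le_jn] le_ajs; rewrite leqNgt; apply/negP => lt_ij.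
  by have := hk_leq (isT : (0 < i.+1)%N) lt_ij le_jn; lia.
exists p; first exact: (poly_expr_pwrseries_in (fun j => @x_val_ge1 i j (ltnW lt_in))
  (poly_expr_widen le_hk pp)).
by rewrite -[p](subKr g); apply: is_valDr gs (val_geN vgp).
Qed.

End HerzogKunz.

(** * The multiplicity *)

Section Conductor.
Variables (k : fieldType) (R : ps k -> Prop).
Hypothesis HR : ksubalg R.
Hypothesis Hfin : finite_over R.
Hypothesis Hbir : birational R.
Hypothesis Hcl : tclosed R.
Implicit Types f g h : ps k.

(* The product of denominators of the module generators of [k[[t]]] over [R]. *)
Lemma common_denominator : exists2 b, b != 0 & forall h, R (h * b).
Proof.
have [d [E spanE]] := Hfin.
have [num /choice [den denP]] := choice (fun j => Hbir (E j)).
exists (\prod_j den j).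
  apply: (big_ind (fun f => f != 0)) => //; [exact: oner_neq0|exact: pmul_neq0|] => j _.
  by have [_ [_ [[l dl] _]]] := denP j; apply: contraNneq dl => ->; rewrite ps0.
move=> h; have [r [Rr ->]] := spanE h; rewrite psumE mulr_suml.
apply: (ksubalg_sum HR) => j _; have [Rn [_ [_ eq_num]]] := denP j; rewrite pmulE in eq_num.
rewrite pmulE (bigD1 j) //= -mulrA (mulrA (E j)) eq_num.
apply: (ksubalgM HR (Rr j)); apply: (ksubalgM HR Rn).
by apply: (ksubalg_prod HR) => l _; have [_ []] := denP l.
Qed.

(* With [b k[[t]] <= R] and [v(b) = c], every series of valuation [>= c] is a
   [t]-adic limit of elements of [b k[[t]]], hence lies in the closed [R]. *)
Lemma conductor : exists C, forall h, val_ge h C -> R h.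
Proof.
have [b b_neq0 Rb] := common_denominator; have [c bc] := exists_is_val b_neq0.
exists c => h hc; apply: Hcl => N.
suff [g [Rg _ vhg]] : exists g, [/\ R g, val_ge g c & val_ge (h - g) N].
  by exists g => // j /vhg; rewrite psB => /eqP; rewrite subr_eq0 => /eqP.
elim: N => [|N [g [Rg gc vhg]]]; first by exists 0; split; [apply: ksubalg0|apply: val_ge0|].
have [vhg'|hgN] := val_geS_or_is_val vhg; first by exists g.
have le_cN : (c <= N)%N := is_val_leq hgN (val_geB hc gc).
have zN : is_val (tpow k (N - c)%N * b) N.
  by rewrite -{2}(subnK le_cN); apply: is_valM (is_val_tpow _ _) bc.
set q := pC ((h - g) N / (tpow k (N - c)%N * b) N) * (tpow k (N - c)%N * b).
exists (g + q); split.
- by apply: (ksubalgD HR Rg); apply: (ksubalgM HR (ksubalgC HR _)).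
- by apply: val_geD gc _; apply/val_geCM/(val_geW le_cN)/is_val_ge.
- by rewrite opprD addrA; apply: val_ge_sub_lead.
Qed.

End Conductor.

Section QuotientDimension.
Variables (k : fieldType) (A B : ps k -> Prop) (K d : nat) (gap : 'I_d -> nat).
Implicit Types f g h : ps k.

Definition ksubspace (S : ps k -> Prop) :=
  [/\ S 0, forall f g, S f -> S g -> S (f + g) & forall c f, S f -> S (pC c * f)].

Hypothesis subA : ksubspace A.
Hypothesis subB : ksubspace B.
Hypothesis subBA : forall f, B f -> A f.
Hypothesis B_val_ge : forall h, val_ge h K -> B h.
Hypothesis gap_inj : injective gap.
Hypothesis gapP : forall s, vset A s /\ ~ vset B s <-> exists r, s = gap r.

Lemma ksubspace_sum (S : ps k -> Prop) I (r : seq I) (F : I -> ps k) :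
  ksubspace S -> (forall i, S (F i)) -> S (\sum_(i <- r) F i).
Proof. by move=> [S0 SD _] SF; apply: big_ind. Qed.

Lemma ksubspaceB (S : ps k -> Prop) f g : ksubspace S -> S f -> S g -> S (f - g).
Proof. by move=> [_ SD SZ] Sf Sg; rewrite -mulN1r -pC1 -pCN; apply/SD/SZ. Qed.

Lemma exists_gap_basis : exists Y : 'I_d -> ps k, forall r, A (Y r) /\ is_val (Y r) (gap r).
Proof.
have ex_Y r : exists f, A f /\ is_val f (gap r).
  by have [[f Af fr] _] := (gapP (gap r)).2 (ex_intro _ r erefl); exists f.
by have [Y YP] := choice ex_Y; exists Y.
Qed.

Section Basis.
Variable Y : 'I_d -> ps k.
Hypothesis YP : forall r, A (Y r) /\ is_val (Y r) (gap r).

Definition comb (c : 'I_d -> k) := \sum_r pC (c r) * Y r.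

Lemma comb_in c : A (comb c).
Proof. by apply: ksubspace_sum => // r; case: subA => _ _; apply; apply: (YP r).1. Qed.

Lemma comb_add_coef c r0 l :
  comb (fun r => c r + (if r == r0 then l else 0)) = comb c + pC l * Y r0.
Proof.
rewrite /comb (eq_bigr (fun r => pC (c r) * Y r + (if r == r0 then pC l * Y r else 0))).
  by rewrite big_split /= -big_mkcond big_pred1_eq.
by move=> r _; rewrite pCD mulrDl; case: eqP => // _; rewrite pC0 mul0r.
Qed.

(* The leading term of a remainder of valuation [N] is cancelled either by an
   element of [B] or, when [N] is a gap, by a basis element. *)
Lemma comb_approx f N : A f -> exists c b, B b /\ val_ge (f - comb c - b) N.
Proof.
move=> Af; elim: N => [|N [c [b [Bb vN]]]].
  by exists (fun _ => 0), 0; split=> //; case: subB.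
set rho := f - comb c - b in vN.
have Arho : A rho := ksubspaceB subA (ksubspaceB subA Af (comb_in c)) (subBA Bb).
have [vN'|rhoN] := val_geS_or_is_val vN; first by exists c, b.
have [[z Bz zN]|notB] := pselect (vset B N).
  exists c, (b + pC (rho N / z N) * z); split; first by case: subB => _ SD SZ; apply/SD/SZ.
  by rewrite opprD addrA; apply: val_ge_sub_lead.
have [r eq_N] := (gapP N).1 (conj (ex_intro2 _ _ rho Arho rhoN) notB); subst N.
set l := rho (gap r) / Y r (gap r).
exists (fun r' => c r' + (if r' == r then l else 0)), b; split=> //.
rewrite comb_add_coef (_ : _ - b = rho - pC l * Y r); last by rewrite /rho; ring.
exact: val_ge_sub_lead (YP r).2 vN.
Qed.

(* Since the gaps are distinct, [v(comb c)] is the least gap carrying a nonzero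
   coefficient, which is not in [v(B)]. *)
Lemma comb_in_B c : B (comb c) -> forall r, c r = 0.
Proof.
move=> Bc r; apply/eqP; apply: contraT => cr.
have ex_s : exists s, [exists r, (c r != 0) && (gap r == s)].
  by exists (gap r); apply/existsP; exists r; rewrite cr eqxx.
case: (ex_minnP ex_s) => s /existsP [r0 /andP [cr0 /eqP gr0]] min_s.
have [_ notB] : vset A s /\ ~ vset B s by apply/gapP; exists r0; rewrite gr0.
exfalso; apply: notB; exists (comb c) => //; rewrite -gr0.
apply: (is_val_sum (j0 := r0)) => [|r' ne_r']; first exact/is_valCM/(YP r0).2.
have [->|cr'] := eqVneq (c r') 0; first by rewrite pC0 mul0r; apply: val_ge0.
apply/val_geCM/(val_geW _ (is_val_ge (YP r').2)).
rewrite ltn_neqAle gr0 min_s ?andbT; last by apply/existsP; exists r'; rewrite cr' eqxx.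
by apply: contraNneq ne_r' => eq_g; apply/eqP/gap_inj; rewrite -eq_g gr0.
Qed.

End Basis.

Lemma kquotdim_gap : kquotdim A B d.
Proof.
have [Y YP] := exists_gap_basis.
have combE c : psum (fun r => pscale (c r) (Y r)) = comb Y c.
  by rewrite psumE; apply: eq_bigr => r _; rewrite pscaleE.
exists Y; split; first by move=> r; case: (YP r).
split=> [f Af|c]; last by rewrite combE; apply: comb_in_B.
have [c [b [Bb vK]]] := comb_approx YP K Af.
exists c, (b + (f - comb Y c - b)); last by rewrite combE paddE; ring.
by case: subB => _ SD _; apply/SD/B_val_ge.
Qed.

End QuotientDimension.

(* [V m] plays the role of [v(mpow R m)]: it lies in [[m e, oo)], contains
   [[C + m e, oo)], and [V m + e <= V (m + 1)] (multiplication by an element of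
   valuation [e] in [m]). *)
Section ValueGaps.
Variables (V : nat -> nat -> Prop) (e C : nat).
Hypothesis e_gt0 : (0 < e)%N.
Hypothesis V_ge : forall m s, V m s -> (m * e <= s)%N.
Hypothesis V_full : forall m s, (C + m * e <= s)%N -> V m s.
Hypothesis V_shift : forall m s, V m s -> V m.+1 (s + e).
Hypothesis V_decr : forall m s, V m.+1 s -> V m s.

Lemma V_shiftn m s q : V m s -> V m (s + q * e).
Proof.
move=> Vs; elim: q => [|q IH]; first by rewrite addn0.
by rewrite mulSnr addnA; apply/V_decr/V_shift.
Qed.

(* [V m] on [[m e, m e + C)]; above this window [V m] is full. *)
Definition window m : {set 'I_C} := [set j : 'I_C | `[< V m (j + m * e) >]].

Lemma window_sub m : window m \subset window m.+1.
Proof.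
apply/subsetP => j; rewrite !inE => /asboolP /V_shift Vj; apply/asboolP.
by rewrite mulSnr addnA.
Qed.

Lemma window_stable : exists N, forall m, (N <= m)%N -> window m = window N.
Proof.
have window_homo :=
  homo_leq (fun A => subxx A) (fun B A C => @subset_trans _ A B C) window_sub.
have ex_v : exists v, `[< exists m, #|window m| = v >].
  by exists #|window 0|; apply/asboolP; exists 0%N.
have le_vC v : `[< exists m, #|window m| = v >] -> (v <= C)%N.
  by move=> /asboolP [m <-]; apply: leq_trans (max_card _) _; rewrite card_ord.
case: (ex_maxnP ex_v le_vC) => v /asboolP [N cardN] max_v; exists N => m le_Nm.
apply/esym/eqP; rewrite eqEcard window_homo //= cardN max_v //.
by apply/asboolP; exists m.
Qed.

Lemma exists_V_residue m (r : 'I_e) : exists s, `[< V m s >] && (s %% e == r)%N.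
Proof.
exists ((C + m * e) * e + r)%N; rewrite modnMDl modn_small // eqxx andbT.
by apply/asboolP/V_full; apply: leq_trans (leq_pmulr _ e_gt0) (leq_addr _ _).
Qed.

Definition gap m (r : 'I_e) := ex_minn (exists_V_residue m r).

Lemma gapP m r : [/\ V m (gap m r), (gap m r %% e = r)%N &
  forall s, V m s -> (s %% e = r)%N -> (gap m r <= s)%N].
Proof.
rewrite /gap; case: ex_minnP => g /andP [/asboolP Vg /eqP gr] min_g.
by split=> // s Vs sr; apply: min_g; rewrite sr eqxx andbT; apply/asboolP.
Qed.

Lemma gap_inj m : injective (gap m).
Proof.
move=> r r' eq_g; apply: val_inj; have [_ gr _] := gapP m r; have [_ gr' _] := gapP m r'.
by rewrite /= -gr -gr' eq_g.
Qed.

Lemma gap_complete m s : V m s -> ~ V m.+1 s -> exists r, s = gap m r.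
Proof.
move=> Vs notV; exists (Ordinal (ltn_pmod s e_gt0)); set r := Ordinal _.
have [Vg gr min_g] := gapP m r; have le_gs := min_g s Vs erefl.
have /dvdnP [q eq_q] : (e %| s - gap m r)%N by rewrite -eqn_mod_dvd // gr.
case: q eq_q => [|q] eq_q; first by lia.
case: notV; rewrite -(subnK le_gs) eq_q mulSnr.
by rewrite (_ : _ + _ = gap m r + e + q * e)%N; [apply/V_shiftn/V_shift|lia].
Qed.

Section Stable.
Variables (N m : nat).
Hypothesis stable : forall m, (N <= m)%N -> window m = window N.
Hypothesis le_Nm : (N <= m)%N.

(* Once the windows are stable, [V (m + 1)] is exactly [V m + e]. *)
Lemma V_unshift s : V m.+1 s -> (e <= s)%N /\ V m (s - e).
Proof.
move=> Vs; have := V_ge Vs; rewrite mulSn => le_s; split; first by lia.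
have [lt_jC|] := ltnP (s - (e + m * e)) C; last by move=> le_Cj; apply: V_full; lia.
have : Ordinal lt_jC \in window m.+1 by rewrite inE; apply/asboolP; rewrite /= mulSn subnK.
rewrite stable ?(leqW le_Nm) // -(stable le_Nm) inE => /asboolP.
by rewrite /= (_ : _ + _ = s - e)%N //; lia.
Qed.

Lemma gap_notV r : ~ V m.+1 (gap m r).
Proof.
have [_ gr min_g] := gapP m r; move=> /V_unshift [le_eg V'].
have := min_g _ V'; rewrite -gr -{2}(subnK le_eg) modnDr => /(_ erefl); lia.
Qed.

End Stable.

Lemma eventually_gaps : exists N, forall m, (N <= m)%N ->
  exists gap : 'I_e -> nat, injective gap /\ forall s, V m s /\ ~ V m.+1 s <-> exists r, s = gap r.
Proof.
have [N stable] := window_stable; exists N => m le_Nm.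
exists (gap m); split; first exact: gap_inj.
move=> s; split=> [[Vs notV]|[r ->]]; first exact: gap_complete Vs notV.
by split; [case: (gapP m r)|apply: gap_notV stable le_Nm r].
Qed.

End ValueGaps.

Section Multiplicity.
Variables (k : fieldType) (R : ps k -> Prop) (e C : nat) (y : ps k).
Hypothesis HR : ksubalg R.
Hypothesis my : maxid R y.
Hypothesis ye : is_val y e.
Hypothesis maxid_ge : forall g, maxid R g -> val_ge g e.
Hypothesis conductorC : forall h, val_ge h C -> R h.

(* Divide by [y^m]: the quotient has valuation [>= C], so it lies in [R]. *)
Lemma mpow_of_val_ge m h : val_ge h (C + m * e) -> mpow R m h.
Proof.
rewrite addnC => hv; have [q [-> /conductorC Rq]] := val_ge_dvd (is_valX m ye) hv.
elim: m {hv} => [|m IH]; first by rewrite expr0 mul1r.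
by rewrite exprSr mulrAC; apply: mpowSM IH my.
Qed.

Lemma ksubspace_mpow m : ksubspace (mpow R m).
Proof.
by split=> [|f g|c f]; [apply: (mpow0 HR)|apply: (mpowD HR)|apply: (mpowCM HR)].
Qed.

Lemma multiplicity_of_val : (0 < e)%N -> multiplicity R e.
Proof.
move=> e_gt0; pose V m s := vset (mpow R m) s.
have V_ge m s : V m s -> (m * e <= s)%N.
  by move=> [f mf fs]; apply: is_val_leq fs (mpow_val_ge maxid_ge mf).
have V_full m s : (C + m * e <= s)%N -> V m s.
  move=> le_s; exists (tpow k s); last exact: is_val_tpow.
  by apply/mpow_of_val_ge/(val_geW le_s)/is_val_ge/is_val_tpow.
have V_shift m s : V m s -> V m.+1 (s + e).
  by move=> [f mf fs]; exists (f * y); [apply: mpowSM|apply: is_valM].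
have V_decr m s : V m.+1 s -> V m s.
  by move=> [f mf fs]; exists f => //; apply: (mpowS_sub HR).
have [N gaps] := eventually_gaps e_gt0 V_ge V_full V_shift V_decr.
exists N => m /gaps [gap [gap_inj gapP]].
exact: (kquotdim_gap (ksubspace_mpow m) (ksubspace_mpow m.+1) (@mpowS_sub _ _ HR m)
  (@mpow_of_val_ge m.+1) gap_inj gapP).
Qed.

End Multiplicity.

Theorem mainTheorem4 (k : fieldType) (R : ps k -> Prop) (n : nat)
    (a : nat -> nat) (x : nat -> ps k) :
  ksubalg R -> finite_over R -> birational R -> tclosed R ->
  hk_seq R n a ->
  (forall i, (1 <= i <= n)%N -> R (x i) /\ is_val (x i) (a i)) ->
  ((vset (maxid R) (a 1%N) /\
      (forall s, vset (maxid R) s -> (a 1%N <= s)%N)) /\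
    multiplicity R (a 1%N)) /\
  (forall i, (1 <= i <= n.-1)%N ->
     vset R (a i.+1) /\ ~ vset (pwrseries_in i x) (a i.+1) /\
     (forall s, vset R s -> ~ vset (pwrseries_in i x) s -> (a i.+1 <= s)%N)) /\
  (forall (l : nat) (f : ps k), R f ->
     exists p g, poly_in (\max_(1 <= i < n.+1 | (a i <= l)%N) i) x p /\
       R g /\ f = padd p g /\ val_ge g l.+1).
Proof.
move=> HR Hfin Hbir Hcl Hhk Hx.
have [n_gt0 [ma1 min_a1]] := hk_first HR Hbir Hhk.
have le1n : (1 <= 1 <= n)%N by rewrite n_gt0.
split; [split=> //|split].
- have [C conductorC] := conductor HR Hfin Hbir Hcl.
  have [_ x1a1] := Hx _ le1n.
  apply: (multiplicity_of_val HR (x_maxid Hhk Hx le1n) x1a1 (maxid_val_ge min_a1) conductorC).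
  exact: vset_maxid_gt0 ma1.
- move=> i /andP [i_gt0 le_in1]; have lt_in : (i < n)%N by lia.
  have [[f [Rf _] fa] _] := hk_vset Hhk (i := i.+1) lt_in.
  split; first by exists f.
  split; first by apply: (hk_notin_pwrseries HR Hhk Hx); rewrite i_gt0.
  move=> s Rs notT; rewrite leqNgt; apply: contra_notN notT => lt_sa.
  exact: (vset_pwrseries_lt HR Hbir Hhk Hx lt_in Rs lt_sa).
move=> l f Rf; have [p [pp vfp]] := approximable_all HR Hbir Hhk Hx l Rf.
exists p, (f - p); split; first exact: poly_expr_poly_in.
split; first exact: (ksubalgB HR Rf (poly_expr_ksubalg HR Hx (hk_index_le n a l) pp)).
by split=> //; rewrite paddE addrC subrK.
Qed.
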